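(* There is an absolute constant $C>0$ such that the following holds. Let $n,d,k\ge 1$, let $\phi:\mathbb{R}\to\mathbb{R}$ be $L$-Lipschitz with $\phi(0)=0$, let $b>0$, and let $x_1,\dots,x_n,x'_1,\dots,x'_n\in\mathbb{R}^d$ satisfy $\|x_i\|_2\le b$ and $\|x'_i\|_2\le b$ for all $i$. For $a,a'>0$ let $\mathcal{J}^k_{a,a'}=\{A\in\mathbb{R}^{d\times k} : \|A\|_{2,1}\le a,\ \|A\|_{op}\le a'\}$. Then $$\widehat{\mathfrak{R}}\big(\mathcal{F}_k(\mathcal{J}^k_{a,a'})\big)\le C\left(\frac1n+\frac{a\,a'\,b^2L^2}{k\sqrt n}\sqrt{\log(2dk)}\,\log\Big(2+\frac{n\,b^2a'^2L^2}{k}\Big)\right).$$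
   Context: For $A\in\mathbb{R}^{d\times k}$ with columns $A_{\cdot 1},\dots,A_{\cdot k}$: $\|A\|_{2,1}=\sum_{j=1}^k\|A_{\cdot j}\|_2$, $\|A\|_{2,\infty}=\max_{j\le k}\|A_{\cdot j}\|_2$, and $\|A\|_{op}$ is the spectral norm. For $u,v\in\mathbb{R}^k$, $\zeta_k(u,v)=\frac1k\|u-v\|_2^2$. The function $\phi$ is applied coordinatewise to vectors. Given fixed points $x_1,\dots,x_n,x'_1,\dots,x'_n\in\mathbb{R}^d$ and a set $\mathcal{G}\subset\mathbb{R}^{d\times k}$, define $\mathcal{F}_k(\mathcal{G})=\{(\zeta_k(\phi(A^tx_i),\phi(A^tx'_i)))_{i=1}^n : A\in\mathcal{G}\}\subset\mathbb{R}^n$. For a set $\mathcal{F}\subset\mathbb{R}^n$, the empirical Rademacher complexity is $\widehat{\mathfrak{R}}(\mathcal{F})=\frac1n\mathbb{E}_\varepsilon\sup_{f\in\mathcal{F}}\sum_{i=1}^n\varepsilon_if_i$, where $\varepsilon_1,\dots,\varepsilon_n$ are i.i.d. uniform on $\{-1,1\}$. *)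

From HB Require Import structures.
From mathcomp Require Import all_boot all_order all_algebra.
From mathcomp Require Import all_classical all_reals.
From mathcomp Require Import Rstruct exp.
From Stdlib Require Import Rdefinitions.
Set Implicit Arguments. Unset Strict Implicit. Unset Printing Implicit Defensive.
Import Order.TTheory GRing.Theory Num.Theory.
Local Open Scope ring_scope.
Local Open Scope classical_set_scope.

Notation RR := Rdefinitions.R.

Definition norm2 (m : nat) (v : 'cV[RR]_m) : RR :=
  Num.sqrt (\sum_(i < m) (v i 0) ^+ 2).

Definition norm21 (d k : nat) (A : 'M[RR]_(d, k)) : RR :=
  \sum_(j < k) norm2 (col j A).

Definition opnorm (d k : nat) (A : 'M[RR]_(d, k)) : RR :=
  sup [set norm2 (A *m v) | v in [set v : 'cV[RR]_k | norm2 v <= 1]].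

Definition zeta (k : nat) (u v : 'cV[RR]_k) : RR :=
  k%:R^-1 * (norm2 (u - v)) ^+ 2.

(* F_k(G) as a set of vectors in R^n (finite functions 'I_n -> R) *)
Definition Fk (n d k : nat) (phi : RR -> RR) (x x' : 'I_n -> 'cV[RR]_d)
  (G : set 'M[RR]_(d, k)) : set ('I_n -> RR) :=
  [set f | exists2 A, G A &
     f = fun i => zeta (map_mx phi (A^T *m x i)) (map_mx phi (A^T *m x' i))].

(* empirical Rademacher complexity: expectation over the uniform measure on
   {-1,1}^n, written as the average over all 2^n sign vectors *)
Definition sgn (b : bool) : RR := if b then 1 else -1.

Definition rademacher (n : nat) (F : set ('I_n -> RR)) : RR :=
  n%:R^-1 * ((2 ^+ n)^-1 *
    \sum_(eps : {ffun 'I_n -> bool})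
       sup [set (\sum_(i < n) sgn (eps i) * f i) | f in F]).

Definition Jset (d k : nat) (a a' : RR) : set 'M[RR]_(d, k) :=
  [set A | norm21 A <= a /\ opnorm A <= a'].

From HB Require Import structures.
From mathcomp Require Import all_boot all_order all_algebra.
From mathcomp Require Import all_classical all_reals.
From mathcomp Require Import Rstruct exp.
From mathcomp Require Import ring lra.
Import Order.TTheory GRing.Theory Num.Theory.
Local Open Scope ring_scope.
Local Open Scope classical_set_scope.
Set Implicit Arguments. Unset Strict Implicit. Unset Printing Implicit Defensive.

(* We prove the sharper bound
     rademacher (F_k(J^k_{a,a'})) <= 36 a a' b^2 L^2 / (k sqrt n);
   since both logarithmic factors of the statement are at least 1/2, the
   theorem follows with C = 144.  Everything is done with the expectation
   written as a finite sum over all 2^n sign vectors.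
   1. Rademacher sums and suprema over an arbitrary index set, and the
      Ledoux-Talagrand contraction principle, proved one coordinate at a time
      by pairing each sign vector with the one flipped at that coordinate.
   2. Second moments of Rademacher sums give E ||sum_i eps_i y_i|| <= b sqrt n.
   3. Single neuron: for S(r) = sup_{||w||<=r} sum_i eps_i
      (phi(w.x_i) - phi(w.x'_i))^2, contraction (twice) and step 2 give
      E S(r) <= 8 L^2 b^2 r^2 sqrt n.
   4. Peeling: with r_m = a' 2^-m, S(r) <= r Q for every r <= a', where the
      random variable Q = sum_m (2/r_m) S(r_m) + (tail) has E Q <= 36 L^2 b^2 a'
      sqrt n.
   5. zeta_k splits over the columns of A; each column has norm <= ||A||_op <= a'
      and the column norms add up to ||A||_{2,1} <= a, so the supremum over
      J^k_{a,a'} is at most (a/k) Q. *)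

Lemma cauchy_schwarz (I : finType) (u v : I -> RR) :
  (\sum_i u i * v i) ^+ 2 <= (\sum_i u i ^+ 2) * (\sum_i v i ^+ 2).
Proof.
pose D i j := u i ^+ 2 * v j ^+ 2 + u j ^+ 2 * v i ^+ 2 - 2 * ((u i * v i) * (u j * v j)).
have lagrange : 0 <= \sum_i \sum_j D i j.
  apply: sumr_ge0 => i _; apply: sumr_ge0 => j _.
  have -> : D i j = (u i * v j - u j * v i) ^+ 2 by rewrite /D; ring.
  exact: sqr_ge0.
have splitD : \sum_i \sum_j D i j =
    \sum_i \sum_j (u i ^+ 2 * v j ^+ 2) + \sum_i \sum_j (u j ^+ 2 * v i ^+ 2)
    - 2 * \sum_i \sum_j ((u i * v i) * (u j * v j)).
  rewrite mulr_sumr -big_split /= -sumrB; apply: eq_bigr => i _.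
  by rewrite mulr_sumr -big_split /= -sumrB.
have prod_ij : \sum_i \sum_j (u i ^+ 2 * v j ^+ 2) = (\sum_i u i ^+ 2) * (\sum_i v i ^+ 2).
  by rewrite mulr_suml; apply: eq_bigr => i _; rewrite mulr_sumr.
have prod_ji : \sum_i \sum_j (u j ^+ 2 * v i ^+ 2) = (\sum_i u i ^+ 2) * (\sum_i v i ^+ 2).
  by rewrite exchange_big.
have square_sum : \sum_i \sum_j ((u i * v i) * (u j * v j)) = (\sum_i u i * v i) ^+ 2.
  by rewrite expr2 mulr_suml; apply: eq_bigr => i _; rewrite mulr_sumr.
move: lagrange; rewrite splitD prod_ij prod_ji square_sum; lra.
Qed.

Lemma cauchy_schwarz_abs (I : finType) (u v : I -> RR) :
  `|\sum_i u i * v i| <= Num.sqrt (\sum_i u i ^+ 2) * Num.sqrt (\sum_i v i ^+ 2).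
Proof.
rewrite -sqrtr_sqr -sqrtrM; last by apply: sumr_ge0 => i _; exact: sqr_ge0.
apply: ler_wsqrtr; exact: cauchy_schwarz.
Qed.

Definition rad_sum n (eps : {ffun 'I_n -> bool}) (v : 'I_n -> RR) : RR :=
  \sum_i sgn (eps i) * v i.

Definition rad_sup n (T : Type) (P : set T) (h : T -> 'I_n -> RR)
    (eps : {ffun 'I_n -> bool}) : RR :=
  sup [set rad_sum eps (h p) | p in P].

Lemma sgn_sqr (s : bool) : sgn s * sgn s = 1.
Proof. by case: s; rewrite /sgn ?mulr1 ?mulrNN ?mulr1. Qed.

Lemma sgn_norm (s : bool) : `|sgn s| = 1.
Proof. by case: s; rewrite /sgn ?normrN normr1. Qed.

Lemma sgn_neg (s : bool) : sgn (~~ s) = - sgn s.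
Proof. by case: s; rewrite /sgn /= ?opprK. Qed.

Lemma rad_sum_le n eps (v : 'I_n -> RR) (B : RR) :
  (forall i, `|v i| <= B) -> rad_sum eps v <= n%:R * B.
Proof.
move=> hB; apply: le_trans (ler_norm _) _; apply: le_trans (ler_norm_sum _ _ _) _.
rewrite mulr_natl -[X in B *+ X]card_ord -sumr_const; apply: ler_sum => i _.
by rewrite normrM sgn_norm mul1r.
Qed.

Section RademacherSup.
Variables (n : nat) (T : Type) (P : set T).

(* For a uniformly bounded class the supremum is finite, hence bounds every
   Rademacher sum of the class. *)
Lemma rad_sup_ge (h : T -> 'I_n -> RR) (B : RR) eps p :
  (forall p i, P p -> `|h p i| <= B) -> P p -> rad_sum eps (h p) <= rad_sup P h eps.
Proof.
move=> hB Pp; apply: ub_le_sup; last by exists p.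
by exists (n%:R * B) => y [q Pq <-]; apply: rad_sum_le => i; exact: hB.
Qed.

Lemma rad_sup_le (h : T -> 'I_n -> RR) eps (c : RR) :
  P !=set0 -> (forall p, P p -> rad_sum eps (h p) <= c) -> rad_sup P h eps <= c.
Proof.
move=> [p0 Pp0] hc; apply: ge_sup; first by exists (rad_sum eps (h p0)), p0.
by move=> y [p Pp <-]; exact: hc.
Qed.

Definition negate (eps : {ffun 'I_n -> bool}) : {ffun 'I_n -> bool} :=
  [ffun i => ~~ eps i].

Lemma rad_sup_sub (u v : T -> 'I_n -> RR) (B : RR) eps :
  P !=set0 -> (forall p i, P p -> `|u p i| <= B) -> (forall p i, P p -> `|v p i| <= B) ->
  rad_sup P (fun p i => u p i - v p i) eps <= rad_sup P u eps + rad_sup P v (negate eps).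
Proof.
move=> P0 hu hv; apply: rad_sup_le P0 _ => p Pp.
have -> : rad_sum eps (fun i => u p i - v p i) = rad_sum eps (u p) + rad_sum (negate eps) (v p).
  rewrite /rad_sum -big_split /=; apply: eq_bigr => i _; rewrite ffunE sgn_neg; ring.
by apply: lerD; [exact: (rad_sup_ge _ hu) | exact: (rad_sup_ge _ hv)].
Qed.

End RademacherSup.

Definition flip n (m : 'I_n) (eps : {ffun 'I_n -> bool}) : {ffun 'I_n -> bool} :=
  [ffun i => if i == m then ~~ eps i else eps i].

Lemma sum_negate n (F : {ffun 'I_n -> bool} -> RR) :
  \sum_eps F (negate eps) = \sum_eps F eps.
Proof.
have negateK : cancel (@negate n) (@negate n).
  by move=> e; apply/ffunP => i; rewrite !ffunE negbK.
by rewrite [RHS](reindex_inj (can_inj negateK)).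
Qed.

Lemma sum_flip n (m : 'I_n) (F : {ffun 'I_n -> bool} -> RR) :
  \sum_eps F (flip m eps) = \sum_eps F eps.
Proof.
have flipK : cancel (flip m) (flip m).
  by move=> e; apply/ffunP => i; rewrite !ffunE; case: eqP => // _; exact: negbK.
by rewrite [RHS](reindex_inj (can_inj flipK)).
Qed.

Lemma rad_sum_split n (m : 'I_n) eps v :
  rad_sum eps v = sgn (eps m) * v m + \sum_(i | i != m) sgn (eps i) * v i.
Proof. by rewrite /rad_sum (bigD1 m). Qed.

Lemma rad_sum_flip n (m : 'I_n) eps v :
  rad_sum (flip m eps) v = - (sgn (eps m) * v m) + \sum_(i | i != m) sgn (eps i) * v i.
Proof.
rewrite (rad_sum_split m) ffunE eqxx sgn_neg mulNr; congr (_ + _).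
by apply: eq_bigr => i /negbTE im; rewrite ffunE im.
Qed.

Section Contraction.
Variables (n : nat) (T : Type) (P : set T).
Hypothesis P_ne : P !=set0.

(* One coordinate of the contraction principle: if h and h' agree off the
   coordinate m, and at m they are psi (t p) and K * t p with psi K-Lipschitz
   on the values of t, then pairing eps with its flip at m does not decrease
   when h is replaced by h'. *)
Lemma contraction_coordinate (h h' : T -> 'I_n -> RR) (t : T -> RR) (psi : RR -> RR)
    (K B : RR) (m : 'I_n) eps :
  (forall p i, P p -> `|h p i| <= B) -> (forall p i, P p -> `|h' p i| <= B) ->
  (forall p i, i != m -> h p i = h' p i) ->
  (forall p, h p m = psi (t p)) -> (forall p, h' p m = K * t p) ->
  (forall p q, P p -> P q -> `|psi (t p) - psi (t q)| <= K * `|t p - t q|) ->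
  rad_sup P h eps + rad_sup P h (flip m eps) <=
  rad_sup P h' eps + rad_sup P h' (flip m eps).
Proof.
move=> hB hB' h_off h_m h'_m psi_lip.
rewrite -lerBrDr; apply: rad_sup_le P_ne _ => p Pp; rewrite lerBrDr -lerBrDl.
apply: rad_sup_le P_ne _ => q Pq; rewrite lerBrDl.
have same_rest : forall r, \sum_(i | i != m) sgn (eps i) * h r i =
    \sum_(i | i != m) sgn (eps i) * h' r i.
  by move=> r; apply: eq_bigr => i im; rewrite h_off.
have A1 := rad_sup_ge eps hB' Pp; have A2 := rad_sup_ge (flip m eps) hB' Pq.
have A3 := rad_sup_ge eps hB' Pq; have A4 := rad_sup_ge (flip m eps) hB' Pp.
move: A1 A2 A3 A4; rewrite !(rad_sum_flip m) !(rad_sum_split m) !h_m !h'_m !same_rest.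
have lip := psi_lip p q Pp Pq.
have lip_pq : psi (t p) - psi (t q) <= K * `|t p - t q| := le_trans (ler_norm _) lip.
have lip_qp : psi (t q) - psi (t p) <= K * `|t p - t q|.
  by apply: le_trans lip; rewrite -normrN opprB; exact: ler_norm.
have lin_abs : K * `|t p - t q| = K * t p - K * t q \/ K * `|t p - t q| = K * t q - K * t p.
  by case: (lerP 0 (t p - t q)) => hd;
    [left; rewrite ger0_norm // | right; rewrite ltr0_norm //]; ring.
move: lip_pq lip_qp lin_abs.
have [-> | ->] : sgn (eps m) = 1 \/ sgn (eps m) = -1 by case: (eps m); [left | right].
all: move=> ? ? [] ?; lra.
Qed.

Lemma contraction (t : T -> 'I_n -> RR) (psi : RR -> RR) (K Bt Bp : RR) :
  (forall p i, P p -> `|t p i| <= Bt) -> (forall p i, P p -> `|psi (t p i)| <= Bp) ->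
  (forall p q i, P p -> P q -> `|psi (t p i) - psi (t q i)| <= K * `|t p i - t q i|) ->
  \sum_eps rad_sup P (fun p i => psi (t p i)) eps <=
  \sum_eps rad_sup P (fun p i => K * t p i) eps.
Proof.
move=> hBt hBp psi_lip.
(* the first j coordinates are already linearized *)
pose hyb (j : nat) p (i : 'I_n) := if (i < j)%N then K * t p i else psi (t p i).
have hyb_bound : forall j p i, P p -> `|hyb j p i| <= `|K| * `|Bt| + `|Bp|.
  move=> j p i Pp; rewrite /hyb; case: ifP => _.
    rewrite normrM; have := hBt p i Pp; have := normr_ge0 K; have := normr_ge0 Bp.
    have := ler_norm Bt; have := normr_ge0 (t p i); nra.
  have := hBp p i Pp; have := ler_norm Bp; have := normr_ge0 K; have := normr_ge0 Bt; nra.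
have hyb_mono : forall j, (j <= n)%N ->
    \sum_eps rad_sup P (hyb 0%N) eps <= \sum_eps rad_sup P (hyb j) eps.
  elim=> [|j IH] hj; first exact: lexx.
  apply: le_trans (IH (ltnW hj)) _.
  pose m := Ordinal (hj : (j < n)%N).
  have pair : \sum_eps (rad_sup P (hyb j) eps + rad_sup P (hyb j) (flip m eps)) <=
      \sum_eps (rad_sup P (hyb j.+1) eps + rad_sup P (hyb j.+1) (flip m eps)).
    apply: ler_sum => eps _.
    apply: (contraction_coordinate (t := fun p => t p m) (psi := psi) (K := K)) => //.
    - exact: hyb_bound.
    - exact: hyb_bound.
    - move=> p i im; rewrite /hyb; congr (if _ then _ else _).
      rewrite [X in _ = X]ltnS [X in _ = X]leq_eqVlt.
      have ij : (nat_of_ord i == j) = false.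
        by apply/negbTE; apply: contra im => /eqP e; apply/eqP/val_inj.
      by rewrite ij.
    - by move=> p; rewrite /hyb /= ltnn.
    - by move=> p; rewrite /hyb /= ltnSn.
    - by move=> p q Pp Pq; exact: psi_lip.
  by move: pair; rewrite !big_split /= !(sum_flip m (rad_sup P _)); lra.
have -> : (fun p i => psi (t p i)) = hyb 0%N.
  by apply: funext => p; apply: funext => i; rewrite /hyb ltn0.
have -> : (fun p i => K * t p i) = hyb n.
  by apply: funext => p; apply: funext => i; rewrite /hyb ltn_ord.
exact: hyb_mono.
Qed.

End Contraction.

Lemma sum_sgn_sgn n (i j : 'I_n) :
  \sum_(eps : {ffun 'I_n -> bool}) sgn (eps i) * sgn (eps j) = if i == j then 2 ^+ n else 0.
Proof.
case: eqP => [->|ij].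
  under eq_bigr do rewrite sgn_sqr.
  by rewrite sumr_const card_ffun card_bool card_ord natrX.
set S := \sum_eps _.
have : S = - S.
  rewrite {1}/S -(sum_flip i) /S -sumrN; apply: eq_bigr => e _.
  rewrite !ffunE eqxx; case: eqP => [ji|_]; first by case: ij.
  by rewrite sgn_neg mulNr.
lra.
Qed.

Lemma rad_sum_second_moment n (a : 'I_n -> RR) :
  \sum_(eps : {ffun 'I_n -> bool}) rad_sum eps a ^+ 2 = 2 ^+ n * \sum_i a i ^+ 2.
Proof.
have expand : forall eps : {ffun 'I_n -> bool}, rad_sum eps a ^+ 2 =
    \sum_i \sum_j (a i * a j) * (sgn (eps i) * sgn (eps j)).
  move=> e; rewrite expr2 /rad_sum mulr_suml; apply: eq_bigr => i _; rewrite mulr_sumr.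
  by apply: eq_bigr => j _; ring.
under eq_bigr do rewrite expand.
rewrite exchange_big /=.
under eq_bigr do rewrite exchange_big /=.
rewrite mulr_sumr; apply: eq_bigr => i _.
under eq_bigr do rewrite -mulr_sumr sum_sgn_sgn.
rewrite (bigD1 i) //= big1; last by move=> j ji; rewrite eq_sym (negbTE ji) mulr0.
by rewrite eqxx addr0 expr2 mulrC.
Qed.

(* E || sum_i eps_i y_i ||_2 <= b sqrt n when every row y_i has norm at most b:
   Jensen (Cauchy-Schwarz over the sign vectors) and the second moment. *)
Lemma expected_norm_rad_sum n (m : nat) (y : 'I_n -> 'I_m -> RR) (b : RR) : 0 <= b ->
  (forall i, \sum_l y i l ^+ 2 <= b ^+ 2) ->
  \sum_(eps : {ffun 'I_n -> bool}) Num.sqrt (\sum_l rad_sum eps (y^~ l) ^+ 2)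
    <= 2 ^+ n * (b * Num.sqrt n%:R).
Proof.
move=> b0 hy.
set V := fun eps : {ffun 'I_n -> bool} => \sum_l rad_sum eps (y^~ l) ^+ 2.
have V0 : forall e, 0 <= V e by move=> e; apply: sumr_ge0 => l _; exact: sqr_ge0.
have card_signs : \sum_(eps : {ffun 'I_n -> bool}) (1 : RR) ^+ 2 = 2 ^+ n.
  by rewrite expr1n sumr_const card_ffun card_bool card_ord natrX.
have sum_V : \sum_eps V eps <= 2 ^+ n * (b ^+ 2 * n%:R).
  rewrite /V exchange_big /=.
  under eq_bigr do rewrite rad_sum_second_moment.
  rewrite -mulr_sumr exchange_big /=; apply: ler_wpM2l; first exact: exprn_ge0.
  rewrite mulr_natr -[X in _ <= _ *+ X]card_ord -sumr_const.
  by apply: ler_sum => i _; exact: hy.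
have jensen : (\sum_eps Num.sqrt (V eps)) ^+ 2 <= 2 ^+ n * \sum_eps V eps.
  have unit_weights : \sum_eps Num.sqrt (V eps) = \sum_eps 1 * Num.sqrt (V eps).
    by apply: eq_bigr => e _; rewrite mul1r.
  have sqrt_sq : \sum_eps V eps = \sum_eps Num.sqrt (V eps) ^+ 2.
    by apply: eq_bigr => e _; rewrite sqr_sqrtr.
  by rewrite unit_weights sqrt_sq -card_signs; exact: cauchy_schwarz.
set S := \sum_eps Num.sqrt (V eps) in jensen *.
have S0 : 0 <= S by apply: sumr_ge0 => e _; exact: sqrtr_ge0.
have sn := sqrtr_ge0 (n%:R : RR).
have sn2 : Num.sqrt (n%:R : RR) ^+ 2 = n%:R by rewrite sqr_sqrtr ?ler0n.
have P0 : (0 : RR) <= 2 ^+ n by rewrite exprn_ge0.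
have : S ^+ 2 <= (2 ^+ n * (b * Num.sqrt n%:R)) ^+ 2.
  apply: le_trans jensen _; rewrite !exprMn sn2 expr2 -mulrA.
  by apply: ler_wpM2l.
rewrite ler_pXn2r // ?nnegrE //; exact: mulr_ge0 P0 (mulr_ge0 b0 sn).
Qed.

Definition dotv d (u v : 'cV[RR]_d) : RR := \sum_l u l 0 * v l 0.
Definition ball d (r : RR) := [set w : 'cV[RR]_d | norm2 w <= r].

Lemma norm2_ge0 d (v : 'cV[RR]_d) : 0 <= norm2 v.
Proof. exact: sqrtr_ge0. Qed.

Lemma norm2_sq d (v : 'cV[RR]_d) : norm2 v ^+ 2 = \sum_l v l 0 ^+ 2.
Proof. by rewrite /norm2 sqr_sqrtr //; apply: sumr_ge0 => l _; exact: sqr_ge0. Qed.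

Lemma norm2_0 d : norm2 (0 : 'cV[RR]_d) = 0.
Proof. by rewrite /norm2 big1 ?sqrtr0 // => l _; rewrite mxE expr0n. Qed.

Lemma ball_0 d (r : RR) : 0 <= r -> @ball d r 0.
Proof. by move=> r0; rewrite /ball /= norm2_0. Qed.

Lemma ball_ne d (r : RR) : 0 <= r -> @ball d r !=set0.
Proof. by move=> r0; exists 0; exact: ball_0. Qed.

Lemma dotv_bound d (w v : 'cV[RR]_d) (r b : RR) : norm2 w <= r -> norm2 v <= b ->
  `|dotv w v| <= r * b.
Proof.
move=> hw hv; apply: le_trans (cauchy_schwarz_abs _ _) _.
by apply: ler_pM => //; exact: norm2_ge0.
Qed.

Lemma dotv0 d (v : 'cV[RR]_d) : dotv 0 v = 0.
Proof. by rewrite /dotv big1 // => l _; rewrite mxE mul0r. Qed.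

Lemma linear_rad_sup d n (y : 'I_n -> 'cV[RR]_d) (c r : RR) eps : 0 <= c -> 0 <= r ->
  rad_sup (@ball d r) (fun w i => c * dotv w (y i)) eps <=
  c * r * Num.sqrt (\sum_l rad_sum eps (fun i => y i l 0) ^+ 2).
Proof.
move=> c0 r0; apply: rad_sup_le (ball_ne d r0) _ => w hw.
have -> : rad_sum eps (fun i => c * dotv w (y i)) =
    c * \sum_l w l 0 * rad_sum eps (fun i => y i l 0).
  rewrite /rad_sum /dotv mulr_sumr.
  under eq_bigr do rewrite !mulr_sumr.
  rewrite exchange_big /=; apply: eq_bigr => l _.
  rewrite !mulr_sumr; apply: eq_bigr => i _; ring.
rewrite -mulrA; apply: ler_wpM2l => //.
apply: le_trans (ler_norm _) _; apply: le_trans (cauchy_schwarz_abs _ _) _.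
by apply: ler_wpM2r; [exact: sqrtr_ge0 | exact: hw].
Qed.

Lemma lipschitz_const_ge0 (phi : RR -> RR) (L : RR) :
  (forall s t : RR, `|phi s - phi t| <= L * `|s - t|) -> 0 <= L.
Proof.
move=> hL; have := hL 1 0; rewrite subr0 normr1 mulr1.
exact: le_trans (normr_ge0 _).
Qed.

Lemma lipschitz_abs_le (phi : RR -> RR) (L s : RR) :
  (forall s t : RR, `|phi s - phi t| <= L * `|s - t|) -> phi 0 = 0 ->
  `|phi s| <= L * `|s|.
Proof. by move=> hL h0; have := hL s 0; rewrite h0 !subr0. Qed.

Definition gap d n (phi : RR -> RR) (x x' : 'I_n -> 'cV[RR]_d) (w : 'cV[RR]_d)
    (i : 'I_n) : RR :=
  (phi (dotv w (x i)) - phi (dotv w (x' i))) ^+ 2.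

Definition gap_sup d n (phi : RR -> RR) (x x' : 'I_n -> 'cV[RR]_d) (r : RR)
    (eps : {ffun 'I_n -> bool}) : RR :=
  rad_sup (@ball d r) (gap phi x x') eps.

Section Neuron.
Variables (d n : nat) (phi : RR -> RR) (L b : RR) (x x' : 'I_n -> 'cV[RR]_d).
Hypothesis phi_lip : forall s t : RR, `|phi s - phi t| <= L * `|s - t|.
Hypothesis phi0 : phi 0 = 0.
Hypothesis b_ge0 : 0 <= b.
Hypothesis x_le : forall i, norm2 (x i) <= b.
Hypothesis x'_le : forall i, norm2 (x' i) <= b.

Let L_ge0 : 0 <= L := lipschitz_const_ge0 phi_lip.

Lemma neuron_bound (y : 'I_n -> 'cV[RR]_d) (r : RR) w i :
  (forall i, norm2 (y i) <= b) -> norm2 w <= r -> `|phi (dotv w (y i))| <= L * (r * b).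
Proof.
move=> hy hw; apply: le_trans (lipschitz_abs_le _ phi_lip phi0) _.
by apply: ler_wpM2l => //; exact: dotv_bound.
Qed.

Lemma neuron_diff_bound (r : RR) w i : norm2 w <= r ->
  `|phi (dotv w (x i)) - phi (dotv w (x' i))| <= 2 * L * b * r.
Proof.
move=> hw; apply: le_trans (ler_normB _ _) _.
have := neuron_bound i x_le hw; have := neuron_bound i x'_le hw; lra.
Qed.

Lemma gap_bound (r : RR) w i : norm2 w <= r -> `|gap phi x x' w i| <= (2 * L * b * r) ^+ 2.
Proof.
move=> hw; have r0 : 0 <= r := le_trans (norm2_ge0 w) hw.
rewrite /gap normrX; apply: lerXn2r; rewrite ?nnegrE ?normr_ge0 //.
  by rewrite !mulr_ge0.
exact: neuron_diff_bound.
Qed.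

Lemma gap_sup_ge0 (r : RR) eps : 0 <= r -> 0 <= gap_sup phi x x' r eps.
Proof.
move=> r0; have -> : (0 : RR) = rad_sum eps (gap phi x x' 0).
  by rewrite /rad_sum big1 // => i _; rewrite /gap !dotv0 subrr expr0n mulr0.
by apply: (rad_sup_ge _ (B := (2 * L * b * r) ^+ 2)) (ball_0 d r0) => w i; exact: gap_bound.
Qed.

Lemma gap_sup_mono (r r' : RR) eps : 0 <= r -> r <= r' ->
  gap_sup phi x x' r eps <= gap_sup phi x x' r' eps.
Proof.
move=> r0 rr'; apply: rad_sup_le (ball_ne d r0) _ => w hw.
apply: (rad_sup_ge _ (B := (2 * L * b * r') ^+ 2)); last exact: le_trans hw rr'.
by move=> v i hv; exact: gap_bound.
Qed.

Lemma gap_sup_trivial (r : RR) eps : 0 <= r ->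
  gap_sup phi x x' r eps <= n%:R * (2 * L * b * r) ^+ 2.
Proof.
move=> r0; apply: rad_sup_le (ball_ne d r0) _ => w hw.
by apply: rad_sum_le => i; exact: gap_bound.
Qed.

(* E sup_{||w||<=r} sum_i eps_i K phi(w.y_i) <= K L r b sqrt n: contract phi
   away, then bound the linear class by the expected norm of sum_i eps_i y_i. *)
Lemma scaled_neuron_expect (y : 'I_n -> 'cV[RR]_d) (K r : RR) :
  0 <= K -> 0 <= r -> (forall i, norm2 (y i) <= b) ->
  \sum_eps rad_sup (@ball d r) (fun w i => K * phi (dotv w (y i))) eps <=
  2 ^+ n * (K * L * r * (b * Num.sqrt n%:R)).
Proof.
move=> K0 r0 hy.
have KLr : 0 <= K * L * r by rewrite !mulr_ge0.
apply: le_trans (_ : \sum_eps rad_sup (@ball d r) (fun w i => (K * L) * dotv w (y i)) eps <= _).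
  apply: (contraction (ball_ne d r0) (psi := fun s => K * phi s) (Bt := r * b)
    (Bp := K * (L * (r * b)))).
  - by move=> w i hw; exact: dotv_bound.
  - by move=> w i hw /=; rewrite normrM ger0_norm //; apply: ler_wpM2l => //; exact: neuron_bound.
  - move=> p q i _ _ /=; rewrite -mulrBr normrM ger0_norm // -mulrA.
    by apply: ler_wpM2l => //; exact: phi_lip.
apply: le_trans (_ : \sum_(eps : {ffun 'I_n -> bool}) (K * L * r) *
    Num.sqrt (\sum_l rad_sum eps (fun i => y i l 0) ^+ 2) <= _).
  by apply: ler_sum => e _; apply: linear_rad_sup => //; exact: mulr_ge0.
rewrite -mulr_sumr mulrCA; apply: ler_wpM2l => //.
have rows : forall i, \sum_l y i l 0 ^+ 2 <= b ^+ 2.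
  by move=> i; rewrite -norm2_sq; apply: lerXn2r; rewrite ?nnegrE ?norm2_ge0.
exact: (expected_norm_rad_sum b_ge0 rows).
Qed.

(* The square is (4 L b r)-Lipschitz on the range of the neuron differences,
   so it can be contracted away. *)
Lemma gap_contraction (r : RR) : 0 <= r ->
  \sum_eps gap_sup phi x x' r eps <=
  \sum_eps rad_sup (@ball d r) (fun w i => 4 * L * b * r *
    (phi (dotv w (x i)) - phi (dotv w (x' i)))) eps.
Proof.
move=> r0.
apply: (contraction (ball_ne d r0) (psi := fun s => s ^+ 2) (Bt := 2 * L * b * r)
  (Bp := (2 * L * b * r) ^+ 2)).
- by move=> w i hw; exact: neuron_diff_bound.
- by move=> w i hw /=; exact: gap_bound.
- move=> p q i hp hq /=; rewrite subr_sqr normrM mulrC.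
  apply: ler_wpM2r; first exact: normr_ge0.
  apply: le_trans (ler_normD _ _) _.
  have := neuron_diff_bound i hp; have := neuron_diff_bound i hq; lra.
Qed.

Lemma gap_sup_expect (r : RR) : 0 <= r ->
  \sum_eps gap_sup phi x x' r eps <= 2 ^+ n * (8 * L ^+ 2 * b ^+ 2 * r ^+ 2 * Num.sqrt n%:R).
Proof.
move=> r0; set K := 4 * L * b * r.
have K0 : 0 <= K by rewrite /K !mulr_ge0.
have Kphi_bound : forall (y : 'I_n -> 'cV[RR]_d) w i, (forall i, norm2 (y i) <= b) ->
    @ball d r w -> `|K * phi (dotv w (y i))| <= K * (L * (r * b)).
  move=> y w i hy hw; rewrite normrM ger0_norm //.
  by apply: ler_wpM2l => //; exact: neuron_bound.
apply: le_trans (gap_contraction r0) _.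
under eq_bigr do under eq_fun do under eq_fun do rewrite mulrBr.
apply: le_trans (_ : \sum_eps (rad_sup (@ball d r) (fun w i => K * phi (dotv w (x i))) eps +
   rad_sup (@ball d r) (fun w i => K * phi (dotv w (x' i))) (negate eps)) <= _).
  apply: ler_sum => e _; apply: (rad_sup_sub (B := K * (L * (r * b)))) (ball_ne d r0) _ _.
  - by move=> w i; exact: Kphi_bound.
  - by move=> w i; exact: Kphi_bound.
rewrite big_split /= (sum_negate (rad_sup (@ball d r) (fun w i => K * phi (dotv w (x' i))))).
have := scaled_neuron_expect K0 r0 x_le; have := scaled_neuron_expect K0 r0 x'_le.
rewrite /K; lra.
Qed.

(* Peeling over the dyadic radii r_m = a' 2^-m: for every r <= a', S(r) <= r Q
   where Q is the random variable below; the term n (2 L b)^2 r_M handles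
   the radii below r_M with the trivial bound. *)
Section Peeling.
Variable a' : RR.
Hypothesis a'_gt0 : 0 < a'.

Definition radius (m : nat) : RR := a' * (2^-1) ^+ m.

Lemma radius_gt0 m : 0 < radius m.
Proof. by rewrite /radius mulr_gt0 // exprn_gt0 // invr_gt0. Qed.

Lemma radiusS m : radius m.+1 = radius m / 2.
Proof. by rewrite /radius exprSr mulrA. Qed.

Lemma radius_shell (r : RR) M : r <= a' ->
  r <= radius M \/ exists2 m : 'I_M, radius m.+1 < r & r <= radius m.
Proof.
move=> ra; elim: M => [|M [IH|[m h1 h2]]].
- by left; rewrite /radius expr0 mulr1.
- case: (lerP r (radius M.+1)) => h; first by left.
  by right; exists ord_max.
- by right; exists (widen_ord (leqnSn M) m).
Qed.

Definition peeling_var (M : nat) (eps : {ffun 'I_n -> bool}) : RR :=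
  \sum_(m < M) (2 / radius m) * gap_sup phi x x' (radius m) eps
  + n%:R * (2 * L * b) ^+ 2 * radius M.

Lemma peeling_term_ge0 m eps : 0 <= (2 / radius m) * gap_sup phi x x' (radius m) eps.
Proof.
apply: mulr_ge0; first by rewrite divr_ge0 // ltW // radius_gt0.
exact: (gap_sup_ge0 _ (ltW (radius_gt0 m))).
Qed.

Lemma peeling_tail_ge0 M : 0 <= n%:R * (2 * L * b) ^+ 2 * radius M.
Proof.
by apply: mulr_ge0; [rewrite mulr_ge0 ?ler0n ?sqr_ge0 | exact: ltW (radius_gt0 M)].
Qed.

Lemma peeling_var_ge0 M eps : 0 <= peeling_var M eps.
Proof.
apply: addr_ge0; last exact: peeling_tail_ge0.
by apply: sumr_ge0 => m _; exact: peeling_term_ge0.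
Qed.

Lemma gap_sup_peeling (r : RR) M eps : 0 <= r -> r <= a' ->
  gap_sup phi x x' r eps <= r * peeling_var M eps.
Proof.
move=> r0 ra; have Sm0 := gap_sup_ge0 eps.
case: (radius_shell M ra) => [small | [m lo hi]].
- (* below the smallest radius: trivial bound, then S(r) <= r * tail term *)
  apply: le_trans (gap_sup_trivial eps r0) _.
  apply: le_trans (_ : r * (n%:R * (2 * L * b) ^+ 2 * radius M) <= _); last first.
    apply: ler_wpM2l => //; rewrite /peeling_var lerDr.
    by apply: sumr_ge0 => j _; exact: peeling_term_ge0.
  have -> : n%:R * (2 * L * b * r) ^+ 2 = r * (n%:R * (2 * L * b) ^+ 2 * r) by ring.
  apply: ler_wpM2l => //; apply: ler_wpM2l => //.
  by rewrite mulr_ge0 ?ler0n ?sqr_ge0.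
- (* in the shell (r_{m+1}, r_m]: S(r) <= S(r_m) <= r (2/r_m) S(r_m) *)
  have rm0 := radius_gt0 m.
  apply: le_trans (gap_sup_mono _ r0 hi) _.
  apply: le_trans (_ : r * ((2 / radius m) * gap_sup phi x x' (radius m) eps) <= _).
    rewrite mulrA -[X in X <= _]mul1r; apply: ler_wpM2r; first exact: Sm0 (ltW rm0).
    by rewrite radiusS in lo; rewrite mulrA ler_pdivlMr // mul1r; lra.
  apply: ler_wpM2l => //; rewrite /peeling_var (bigD1 m) //= -addrA lerDl.
  apply: addr_ge0; last exact: peeling_tail_ge0.
  by apply: sumr_ge0 => j _; exact: peeling_term_ge0.
Qed.

Lemma peeling_term_expect m :
  \sum_eps (2 / radius m) * gap_sup phi x x' (radius m) eps <=
  2 ^+ n * (16 * L ^+ 2 * b ^+ 2 * Num.sqrt n%:R * a') * (2^-1) ^+ m.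
Proof.
have rm := radius_gt0 m.
rewrite -mulr_sumr.
apply: le_trans (_ : 2 / radius m *
  (2 ^+ n * (8 * L ^+ 2 * b ^+ 2 * radius m ^+ 2 * Num.sqrt n%:R)) <= _).
  by apply: ler_wpM2l; [rewrite divr_ge0 // ltW | exact: gap_sup_expect (ltW rm)].
rewrite le_eqVlt; apply/orP; left; apply/eqP; rewrite /radius; field.
by rewrite expf_neq0 ?gt_eqF // ?invr_gt0.
Qed.

Lemma geometric_sum M : \sum_(m < M) ((2 : RR)^-1) ^+ m = 2 - 2 * (2^-1) ^+ M.
Proof.
elim: M => [|M IH]; first by rewrite big_ord0 expr0 mulr1 subrr.
by rewrite big_ord_recr /= IH exprSr; field.
Qed.

Lemma nat_mul_half_pow (k : nat) : k%:R * ((2 : RR)^-1) ^+ k <= 1.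
Proof.
rewrite exprVn ler_pdivrMr ?exprn_gt0 // mul1r -natrX ler_nat.
exact: ltnW (ltn_expl _ _).
Qed.

Lemma peeling_var_expect : (1 <= n)%N ->
  \sum_eps peeling_var n eps <= 2 ^+ n * (L ^+ 2 * b ^+ 2 * a' * (36 * Num.sqrt n%:R)).
Proof.
move=> n1.
rewrite /peeling_var big_split /= exchange_big /= sumr_const card_ffun card_bool card_ord.
have shells : \sum_(m < n) \sum_eps (2 / radius m) * gap_sup phi x x' (radius m) eps <=
    \sum_(m < n) 2 ^+ n * (16 * L ^+ 2 * b ^+ 2 * Num.sqrt n%:R * a') * (2^-1) ^+ m.
  by apply: ler_sum => m _; exact: peeling_term_expect.
apply: le_trans (lerD shells (lexx _)) _.
rewrite -mulr_sumr geometric_sum -[X in _ + X <= _]mulr_natr natrX /radius.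
have sqrt_n : 1 <= Num.sqrt (n%:R : RR).
  by rewrite -[X in X <= _]sqrtr1; apply: ler_wsqrtr; rewrite ler1n.
have half_pow := nat_mul_half_pow n.
have h0 : 0 <= ((2 : RR)^-1) ^+ n by rewrite exprn_ge0 // invr_ge0.
have P0 : (0 : RR) <= 2 ^+ n by rewrite exprn_ge0.
have W0 : 0 <= L ^+ 2 * b ^+ 2 * a' by rewrite !mulr_ge0 ?sqr_ge0 // ltW.
move: sqrt_n half_pow h0 P0 W0.
set P := (2 : RR) ^+ n; set h := ((2 : RR)^-1) ^+ n; set q := Num.sqrt _.
set W := L ^+ 2 * b ^+ 2 * a' => sqrt_n half_pow h0 P0 W0.
have -> : P * (16 * L ^+ 2 * b ^+ 2 * q * a') * (2 - 2 * h) + n%:R * (2 * L * b) ^+ 2 * (a' * h) * P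
   = P * W * (32 * q - 32 * q * h + 4 * (n%:R * h)) by rewrite /W; ring.
have -> : P * (W * (36 * q)) = P * W * (36 * q) by ring.
apply: ler_wpM2l; first exact: mulr_ge0.
have : 0 <= q * h by rewrite mulr_ge0 // sqrtr_ge0.
lra.
Qed.

End Peeling.

End Neuron.

(* Every column of A has norm at most ||A||_op (test the unit vectors). *)
Lemma norm2_delta k (j : 'I_k) : norm2 (delta_mx j 0 : 'cV[RR]_k) = 1.
Proof.
rewrite /norm2 (bigD1 j) //= big1 ?addr0; first by rewrite mxE !eqxx /= expr1n sqrtr1.
by move=> i ij; rewrite mxE (negbTE ij) /= expr0n.
Qed.

Lemma opnorm_has_ubound d k (A : 'M[RR]_(d, k)) :
  has_ubound [set norm2 (A *m v) | v in [set v : 'cV[RR]_k | norm2 v <= 1]].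
Proof.
exists (Num.sqrt (\sum_l \sum_j A l j ^+ 2)) => y [v hv <-].
apply: ler_wsqrtr; apply: ler_sum => l _.
have hv2 : \sum_j v j 0 ^+ 2 <= 1.
  by rewrite -norm2_sq -(expr1n _ 2); apply: lerXn2r; rewrite ?nnegrE ?norm2_ge0.
rewrite mxE; apply: le_trans (cauchy_schwarz (fun j => A l j) (fun j => v j 0)) _.
rewrite -[X in _ <= X]mulr1; apply: ler_wpM2l => //.
by apply: sumr_ge0 => j _; exact: sqr_ge0.
Qed.

Lemma norm2_col_le_opnorm d k (A : 'M[RR]_(d, k)) j : norm2 (col j A) <= opnorm A.
Proof.
apply: (ub_le_sup (opnorm_has_ubound A)); exists (delta_mx j 0); last by rewrite colE.
by rewrite /= norm2_delta.
Qed.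

Lemma Jset_0 d k (a a' : RR) : 0 < a -> 0 < a' -> @Jset d k a a' 0.
Proof.
move=> a0 a'0; split.
  by rewrite /norm21 big1 ?ltW // => j _; rewrite col0 norm2_0.
apply: ge_sup; first by exists 0, 0; [rewrite /= norm2_0 ler01 | rewrite mul0mx norm2_0].
by move=> y [v _ <-]; rewrite mul0mx norm2_0 ltW.
Qed.

Lemma zeta_columns d n k (phi : RR -> RR) (x x' : 'I_n -> 'cV[RR]_d) (A : 'M[RR]_(d, k)) i :
  zeta (map_mx phi (A^T *m x i)) (map_mx phi (A^T *m x' i)) =
  k%:R^-1 * \sum_j gap phi x x' (col j A) i.
Proof.
rewrite /zeta norm2_sq; congr (_ * _); apply: eq_bigr => j _.
rewrite /gap !mxE /dotv; congr ((phi _ - phi _) ^+ 2);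
  by apply: eq_bigr => l _; rewrite !mxE.
Qed.

Section Network.
Variables (d n k : nat) (phi : RR -> RR) (L b a a' : RR) (x x' : 'I_n -> 'cV[RR]_d).
Hypothesis phi_lip : forall s t : RR, `|phi s - phi t| <= L * `|s - t|.
Hypothesis phi0 : phi 0 = 0.
Hypothesis b_ge0 : 0 <= b.
Hypothesis x_le : forall i, norm2 (x i) <= b.
Hypothesis x'_le : forall i, norm2 (x' i) <= b.
Hypotheses (a_gt0 : 0 < a) (a'_gt0 : 0 < a').

(* For A in J^k_{a,a'} the Rademacher sum is at most (a/k) Q(eps): split over
   the columns, peel each column (norm <= a') and add up (total norm <= a). *)
Lemma rad_sum_network_le (A : 'M[RR]_(d, k)) eps : @Jset d k a a' A ->
  rad_sum eps (fun i => zeta (map_mx phi (A^T *m x i)) (map_mx phi (A^T *m x' i))) <=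
  k%:R^-1 * (a * peeling_var phi L b x x' a' n eps).
Proof.
move=> [norm21_le opnorm_le].
have Q0 := peeling_var_ge0 phi_lip phi0 b_ge0 x_le x'_le a'_gt0 n eps.
have -> : rad_sum eps (fun i => zeta (map_mx phi (A^T *m x i)) (map_mx phi (A^T *m x' i))) =
    k%:R^-1 * \sum_j rad_sum eps (gap phi x x' (col j A)).
  rewrite /rad_sum mulr_sumr; under eq_bigr do rewrite zeta_columns !mulr_sumr.
  rewrite exchange_big /=; apply: eq_bigr => j _.
  rewrite mulr_sumr; apply: eq_bigr => i _; ring.
apply: ler_wpM2l; first by rewrite invr_ge0 ler0n.
apply: le_trans (_ : \sum_j norm2 (col j A) * peeling_var phi L b x x' a' n eps <= _); last first.
  by rewrite -mulr_suml; exact: ler_wpM2r.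
apply: ler_sum => j _; have r0 := norm2_ge0 (col j A).
apply: le_trans (_ : gap_sup phi x x' (norm2 (col j A)) eps <= _).
  apply: (rad_sup_ge _ (B := (2 * L * b * norm2 (col j A)) ^+ 2)); last exact: lexx.
  by move=> w i hw; exact: (gap_bound phi_lip phi0 b_ge0 x_le x'_le).
apply: (gap_sup_peeling phi_lip phi0 b_ge0 x_le x'_le a'_gt0) => //.
exact: le_trans (norm2_col_le_opnorm A j) opnorm_le.
Qed.

Lemma rademacher_network_le : (1 <= n)%N ->
  rademacher (Fk phi x x' (@Jset d k a a')) <=
  n%:R^-1 * (k%:R^-1 * (a * (L ^+ 2 * b ^+ 2 * a' * (36 * Num.sqrt n%:R)))).
Proof.
move=> n1; rewrite /rademacher; apply: ler_wpM2l; first by rewrite invr_ge0 ler0n.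
rewrite ler_pdivrMl ?exprn_gt0 //.
apply: le_trans (_ : \sum_eps k%:R^-1 * (a * peeling_var phi L b x x' a' n eps) <= _).
  apply: ler_sum => eps _; apply: ge_sup.
    pose A0 := (0 : 'M[RR]_(d, k)).
    exists (rad_sum eps (fun i => zeta (map_mx phi (A0^T *m x i)) (map_mx phi (A0^T *m x' i)))).
    exists (fun i => zeta (map_mx phi (A0^T *m x i)) (map_mx phi (A0^T *m x' i))) => //.
    by exists A0 => //; exact: Jset_0.
  by move=> y [f [A hA ->] <-]; exact: rad_sum_network_le.
rewrite -!mulr_sumr [in X in _ <= X]mulrCA [in X in _ <= _ * X]mulrCA.
apply: ler_wpM2l; first by rewrite invr_ge0 ler0n.
apply: ler_wpM2l; first exact: ltW.
exact: (peeling_var_expect phi_lip phi0 b_ge0 x_le x'_le a'_gt0 n1).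
Qed.

End Network.

(* The logarithmic factors of the statement are harmless: each is >= 1/2. *)
Lemma ln_ge_half (y : RR) : 2 <= y -> 2^-1 <= ln y.
Proof.
move=> y2; apply: le_trans (_ : ln 2 <= _); last by rewrite ler_ln // posrE; lra.
have := @le_ln1Dx RR (- 2^-1) ltac:(lra).
have -> : (1 + - 2^-1 : RR) = 2^-1 by field.
by rewrite lnV ?posrE //; lra.
Qed.

Lemma log_factors_ge (d k : nat) (z : RR) : (1 <= d)%N -> (1 <= k)%N -> 0 <= z ->
  4^-1 <= Num.sqrt (ln (2 * d%:R * k%:R)) * ln (2 + z).
Proof.
move=> d1 k1 z0.
have dR : (1 : RR) <= d%:R by rewrite ler1n.
have kR : (1 : RR) <= k%:R by rewrite ler1n.
have sqrt_ln : 2^-1 <= Num.sqrt (ln (2 * d%:R * k%:R) : RR).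
  have ln_dk : 2^-1 <= ln (2 * d%:R * k%:R : RR) by apply: ln_ge_half; nra.
  rewrite -[X in X <= _]ger0_norm ?invr_ge0 ?ler0n // -sqrtr_sqr.
  by apply: ler_wsqrtr; lra.
have ln_z : 2^-1 <= ln (2 + z) by apply: ln_ge_half; lra.
nra.
Qed.

Local Close Scope classical_set_scope.

Theorem theorem1 :
  exists C : RR, 0 < C /\
  forall (n d k : nat), (1 <= n)%N -> (1 <= d)%N -> (1 <= k)%N ->
  forall (phi : RR -> RR) (L : RR),
    (forall s t : RR, `|phi s - phi t| <= L * `|s - t|) ->
    phi 0 = 0 ->
  forall (b : RR), 0 < b ->
  forall (x x' : 'I_n -> 'cV[RR]_d),
    (forall i, norm2 (x i) <= b) -> (forall i, norm2 (x' i) <= b) ->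
  forall (a a' : RR), 0 < a -> 0 < a' ->
    rademacher (Fk phi x x' (@Jset d k a a')) <=
    C * (n%:R^-1 +
         a * a' * b ^+ 2 * L ^+ 2 / (k%:R * Num.sqrt n%:R)
         * Num.sqrt (ln (2 * d%:R * k%:R))
         * ln (2 + n%:R * b ^+ 2 * a' ^+ 2 * L ^+ 2 / k%:R)).
Proof.
exists 144; split; first lra.
move=> n d k n1 d1 k1 phi L phi_lip phi0 b b0 x x' x_le x'_le a a' a0 a'0.
apply: le_trans (rademacher_network_le k phi_lip phi0 (ltW b0) x_le x'_le a0 a'0 n1) _.
have L0 := lipschitz_const_ge0 phi_lip.
have nR : (0 : RR) < n%:R by rewrite ltr0n.
have kR : (0 : RR) < k%:R by rewrite ltr0n.
set s := Num.sqrt (n%:R : RR).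
have s0 : 0 < s by rewrite sqrtr_gt0.
have n_sq : (n%:R : RR) = s ^+ 2 by rewrite sqr_sqrtr // ltW.
set X := a * a' * b ^+ 2 * L ^+ 2 / (k%:R * s).
have X0 : 0 <= X by rewrite /X divr_ge0 ?mulr_ge0 ?sqr_ge0 // ltW // mulr_gt0.
have -> : n%:R^-1 * (k%:R^-1 * (a * (L ^+ 2 * b ^+ 2 * a' * (36 * s)))) = 36 * X.
  by rewrite /X [in LHS]n_sq; field; rewrite !gt_eqF.
have z0 : 0 <= n%:R * b ^+ 2 * a' ^+ 2 * L ^+ 2 / k%:R := divr_ge0
  (mulr_ge0 (mulr_ge0 (mulr_ge0 (ler0n _ n) (sqr_ge0 b)) (sqr_ge0 a')) (sqr_ge0 L)) (ler0n _ k).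
have logs := log_factors_ge d1 k1 z0.
have : X * 4^-1 <= X * Num.sqrt (ln (2 * d%:R * k%:R)) *
    ln (2 + n%:R * b ^+ 2 * a' ^+ 2 * L ^+ 2 / k%:R) by rewrite -mulrA; apply: ler_wpM2l.
have : 0 <= (n%:R : RR)^-1 by rewrite invr_ge0 ltW.
lra.
Qed.
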